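(* Let $\mathcal C$ be an operadic category and $u$ an object of $\mathcal C$. Then $u$ is trivial if and only if $u$ is a fibre of the identity morphism $1_u$, i.e. $u=1_u^{-1}i$ for some $i\in|u|$.
   Context: Let $\mathcal S$ be a skeleton of the category of finite sets, with objects identified with $\mathbb N$ (where $n=\{1,\dots,n\}$). For each finite set $I$ fix an equivalence $R_I:\mathcal S/I\to\mathcal S^I$ sending $f:J\to I$ to its family of fibres $(f^{-1}i)_{i\in I}$. For a category $\mathcal C$ and object $d$, $\mathcal C/d$ is the slice category and $\mathrm{dom}:\mathcal C/d\to\mathcal C$ the domain functor. An operadic category is a category $\mathcal C$ with a functor $|\cdot|:\mathcal C\to\mathcal S$ (cardinality) and, for each object $c$, a functor $R_c:\mathcal C/c\to\mathcal C^{|c|}$ such that $|\cdot|^{|c|}\circ R_c=R_{|c|}\circ(|\cdot|/c)$, where $|\cdot|/c:\mathcal C/c\to\mathcal S/|c|$ sends $\varphi$ to $|\varphi|$. For $\psi:c\to d$ and $i\in|d|$ write $\psi^{-1}i$ (the $i$-th fibre of $\psi$) for the $i$-th component of $R_d(\psi)$; thus $|\psi^{-1}i|=|\psi|^{-1}i$. For $\varphi:b\to c$, $\psi:c\to d$ write $\varphi^\psi:R_d(\psi\varphi)\to R_d(\psi)$ for the image under $R_d$ of the morphism $\varphi:\psi\varphi\to\psi$ of $\mathcal C/d$, with components $\varphi^\psi_j:(\psi\varphi)^{-1}j\to\psi^{-1}j$. An object $u$ is trivial if $|u|=1$ and $R_u=\mathrm{dom}$ (identifying $\mathcal C^1$ with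 $\mathcal C$). The axioms are: (i) every fibre $1_c^{-1}i$ of an identity morphism is trivial; (ii) (double slice condition) for every $\psi:c\to d$, the functor $R_c\circ(\mathrm{dom}/\psi)$, where $\mathrm{dom}/\psi:(\mathcal C/d)/\psi\to\mathcal C/c$ is the canonical isomorphism, equals the composite $(\mathcal C/d)/\psi\xrightarrow{R_d/\psi}\mathcal C^{|d|}/R_d(\psi)\cong\prod_{j\in|d|}\mathcal C/\psi^{-1}j\xrightarrow{\prod_j R_{\psi^{-1}j}}\prod_{j\in|d|}\mathcal C^{|\psi^{-1}j|}\cong\mathcal C^{|c|}$, the last identification using $|\psi^{-1}j|=|\psi|^{-1}j$ and the canonical bijection $|c|\cong\sum_j|\psi|^{-1}j$ (on objects: $(\varphi^\psi_{|\psi|(i)})^{-1}i=\varphi^{-1}i$ for $\varphi:b\to c$, $i\in|c|$). *)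

From mathcomp Require Import all_boot.
Set Implicit Arguments. Unset Strict Implicit. Unset Printing Implicit Defensive.

(*  * A category is presented with an object type [Ob], an arrow type [Ar],  *)
(*    domain/codomain maps, identities and a total composition [comp f g]   *)
(*    (= f o g), whose value is only constrained when [cod g = dom f].      *)
(*  * The skeleton S of finite sets has objects nat (n = {0,..,n-1}); an     *)
(*    S-morphism m -> n is represented by a function nat -> nat mapping      *)
(*    every k < m to a value < n (values outside {0..m-1} are irrelevant;   *)
(*    equality of S-morphisms = agreement on {0,..,m-1}).                    *)
(*  * The fixed equivalences R_I : S/I -> S^I identify each fibre f^{-1} i   *)
(*    with {0,..,#f^{-1}i - 1} order-preservingly (k-th element <-> k).      *)
(*  * [fib f j] is the j-th fibre f^{-1} j (meaningful for j < |cod f|);     *)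
(*    [fibmor phi psi j] is phi^psi_j : (psi o phi)^{-1} j -> psi^{-1} j.    *)
(*    R_c on a morphism sigma : (f o sigma) -> f of C/c is [fibmor sigma f]. *)

Definition sfib (m : nat) (g : nat -> nat) (j : nat) : seq nat :=
  [seq x <- iota 0 m | g x == j].

Record PreOperadic := {
  Ob : Type;
  Ar : Type;
  dom : Ar -> Ob;
  cod : Ar -> Ob;
  idm : Ob -> Ar;
  comp : Ar -> Ar -> Ar;
  dom_idm : forall a, dom (idm a) = a;
  cod_idm : forall a, cod (idm a) = a;
  dom_comp : forall f g, cod g = dom f -> dom (comp f g) = dom g;
  cod_comp : forall f g, cod g = dom f -> cod (comp f g) = cod f;
  comp_idl : forall f, comp (idm (cod f)) f = f;
  comp_idr : forall f, comp f (idm (dom f)) = f;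
  compA : forall f g h, cod h = dom g -> cod g = dom f ->
    comp f (comp g h) = comp (comp f g) h;
  ocard : Ob -> nat;
  ocard_ar : Ar -> nat -> nat;
  ocard_ar_lt : forall f k, k < ocard (dom f) -> ocard_ar f k < ocard (cod f);
  ocard_idm : forall a k, k < ocard a -> ocard_ar (idm a) k = k;
  ocard_comp : forall f g k, cod g = dom f -> k < ocard (dom g) ->
    ocard_ar (comp f g) k = ocard_ar f (ocard_ar g k);
  fib : Ar -> nat -> Ob;
  fibmor : Ar -> Ar -> nat -> Ar;
  fibmor_dom : forall phi psi j, cod phi = dom psi -> j < ocard (cod psi) ->
    dom (fibmor phi psi j) = fib (comp psi phi) j;
  fibmor_cod : forall phi psi j, cod phi = dom psi -> j < ocard (cod psi) ->
    cod (fibmor phi psi j) = fib psi j;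
  fibmor_idm : forall psi j, j < ocard (cod psi) ->
    fibmor (idm (dom psi)) psi j = idm (fib psi j);
  fibmor_comp : forall sigma tau psi j,
    cod sigma = dom tau -> cod tau = dom psi -> j < ocard (cod psi) ->
    fibmor (comp tau sigma) psi j
      = comp (fibmor tau psi j) (fibmor sigma (comp psi tau) j);
  (* |.|^{|c|} o R_c = R_{|c|} o (|.|/c), on objects and on morphisms *)
  ocard_fib : forall f j, j < ocard (cod f) ->
    ocard (fib f j) = size (sfib (ocard (dom f)) (ocard_ar f) j);
  ocard_fibmor : forall phi psi j k, cod phi = dom psi -> j < ocard (cod psi) ->
    k < ocard (fib (comp psi phi) j) ->
    ocard_ar (fibmor phi psi j) k
      = index (ocard_ar phi
                 (nth 0 (sfib (ocard (dom phi)) (ocard_ar (comp psi phi)) j) k))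
              (sfib (ocard (dom psi)) (ocard_ar psi) j)
}.

Section Defs.
Variable C : PreOperadic.

(* position of i in its fibre |psi|^{-1}(|psi| i): the canonical bijection   *)
(* |c| = sum_j |psi|^{-1} j sends i to (|psi| i, pos psi i)                  *)
Definition pos (psi : Ar C) (i : nat) : nat :=
  index i (sfib (ocard (dom psi)) (ocard_ar psi) (ocard_ar psi i)).

(* u is trivial: |u| = 1 and R_u = dom (identifying C^1 with C) *)
Definition is_trivial (u : Ob C) : Prop :=
  [/\ ocard u = 1,
      (forall f : Ar C, cod f = u -> fib f 0 = dom f) &
      (forall sigma f : Ar C, cod sigma = dom f -> cod f = u ->
         fibmor sigma f 0 = sigma)].

End Defs.

Record OperadicCategory := {
  pre :> PreOperadic;
  fib_idm_trivial : forall (c : Ob pre) i, i < ocard c ->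
    is_trivial (fib (idm c) i);
  dslice_obj : forall (phi psi : Ar pre) i, cod phi = dom psi ->
    i < ocard (dom psi) ->
    fib (fibmor phi psi (ocard_ar psi i)) (pos psi i) = fib phi i;
  dslice_mor : forall (sigma phi psi : Ar pre) i,
    cod sigma = dom phi -> cod phi = dom psi -> i < ocard (dom psi) ->
    fibmor sigma phi i
      = fibmor (fibmor sigma (comp psi phi) (ocard_ar psi i))
               (fibmor phi psi (ocard_ar psi i)) (pos psi i)
}.

From mathcomp Require Import all_boot.

Lemma trivial_ocard_gt0 (C : PreOperadic) (u : Ob C) :
  is_trivial u -> 0 < ocard u.
Proof. by case=> ->. Qed.

Lemma trivial_fib_idm (C : PreOperadic) (u : Ob C) :
  is_trivial u -> fib (idm u) 0 = u.
Proof. by case=> _ fib_dom _; rewrite fib_dom ?dom_idm ?cod_idm. Qed.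

Theorem proposition2p3 (C : OperadicCategory) (u : Ob C) :
  is_trivial u <-> exists i : nat, (i < ocard u) /\ (u = fib (idm u) i).
Proof.
split=> [u_triv | [i [lt_i_u ->]]].
- by exists 0; rewrite trivial_fib_idm ?trivial_ocard_gt0.
- exact: fib_idm_trivial.
Qed.
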